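(* Let $q$ be a prime power, $n\ge 3$ an integer, and $\mathbb F$ a field with a $\mathrm{GF}(q)$-subfield. Let $A\in\mathcal{PG}(n-1,q)$ with column set $E(N)$, and let $N=\tilde M(A)\cong\mathrm{PG}(n-1,q)$. Let $L_0$ be a line of $N$, let $v\in \mathrm{col}_{\mathbb F}(A[L_0])$ be a vector not parallel to any column of $A[L_0]$, let $f\in E(N)-L_0$, and let $\mathcal L$ be the set of lines of $N$ contained in $\mathrm{cl}_N(L_0\cup\{f\})$ and not containing $f$. For each $L\in\mathcal L$ let $v_L$ be a nonzero vector in the one-dimensional subspace $\mathrm{col}_{\mathbb F}(A[L])\cap \mathrm{col}_{\mathbb F}(v\,|\,A[f])$. Let $X=\{x_L: L\in\mathcal L\}$ be a set of $|\mathcal L|$ new elements and let $\overline A\in \mathbb F^{[n]\times(E(N)\cup X)}$ be the matrix with $\overline A[E(N)]=A$ and $\overline A[x_L]=v_L$ for each $L\in\mathcal L$. Then the matroid $\tilde M(\overline A)$ is determined up to isomorphism by $n$ and $q$ alone (independently of $\mathbb F$, $A$, $L_0$, $v$, $f$ and the choice of the vectors $v_L$).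
   Context: For $n\in\mathbb Z^+$, $[n]=\{1,\dots,n\}$. $\mathcal{PG}(n-1,q)$ is the set of $\mathrm{GF}(q)$-matrices $G$ with row set $[n]$ such that the matroid $\tilde M(G)$ represented by the columns of $G$ is isomorphic to $\mathrm{PG}(n-1,q)$. For a matrix $A$ over a field $\mathbb F$ with column set $E$, $\tilde M(A)$ is the (abstract) matroid on $E$ whose independent sets are the sets of linearly independent columns; $A[Y]$ is the submatrix on columns $Y$, $A[f]$ the column $f$, and $\mathrm{col}_{\mathbb F}(\cdot)$ denotes the $\mathbb F$-column space. $(v\,|\,A[f])$ is the two-column matrix with columns $v$ and $A[f]$. *)

From HB Require Import structures.
From mathcomp Require Import all_boot all_order all_algebra.
Set Implicit Arguments. Unset Strict Implicit. Unset Printing Implicit Defensive.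
Import GRing.Theory.
Local Open Scope ring_scope.

Section MatroidDefs.
Variable E : finType.
Variable ind : {set E} -> bool.

Definition mrank (X : {set E}) : nat :=
  (\max_(Y : {set E} | (Y \subset X) && ind Y) #|Y|)%N.

Definition mcl (X : {set E}) : {set E} :=
  [set e | mrank (e |: X) == mrank X].

Definition mline (L : {set E}) : bool := (mcl L == L) && (mrank L == 2%N).
End MatroidDefs.

Definition miso (E1 E2 : finType) (ind1 : {set E1} -> bool)
  (ind2 : {set E2} -> bool) : Prop :=
  exists phi : E1 -> E2, bijective phi /\ forall Y : {set E1}, ind1 Y = ind2 (phi @: Y).

(* A matrix over F with row set [n] and column set E is a family of
   column vectors A e : 'cV[F]_n. *)
Definition mindep (F : fieldType) (n : nat) (E : finType) (A : E -> 'cV[F]_n)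
  (Y : {set E}) : bool := free [seq A e | e <- enum Y].

Definition colspan (F : fieldType) (n : nat) (E : finType) (A : E -> 'cV[F]_n)
  (Y : {set E}) : {vspace 'cV[F]_n} := <<[seq A e | e <- enum Y]>>%VS.

(* Points of PG(n-1,K): nonzero vectors of K^n whose first nonzero entry is 1
   (one canonical representative of each 1-dimensional subspace). *)
Definition pg_normalized (K : finFieldType) (n : nat) (v : 'cV[K]_n) : bool :=
  [exists i : 'I_n, (v i 0 == 1) && [forall j : 'I_n, (j < i)%N ==> (v j 0 == 0)]].

Definition PGpt (K : finFieldType) (n : nat) := {v : 'cV[K]_n | pg_normalized v}.

Definition PGindep (K : finFieldType) (n : nat) (Y : {set PGpt K n}) : bool :=
  free [seq val p | p <- enum Y].

Definition isPG (K : finFieldType) (F : fieldType) (n : nat) (E : finType)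
  (A : E -> 'cV[F]_n) : Prop := miso (mindep A) (@PGindep K n).

Definition calL (F : fieldType) (n : nat) (E : finType) (A : E -> 'cV[F]_n)
  (L0 : {set E}) (f : E) (L : {set E}) : bool :=
  [&& mline (mindep A) L, L \subset mcl (mindep A) (f |: L0) & f \notin L].

(* column set E(N) \cup X, where X = {x_L : L in calL} is disjoint from E *)
Definition extE (F : fieldType) (n : nat) (E : finType) (A : E -> 'cV[F]_n)
  (L0 : {set E}) (f : E) : finType :=
  (E + {L : {set E} | calL A L0 f L})%type.

Definition Abar (F : fieldType) (n : nat) (E : finType) (A : E -> 'cV[F]_n)
  (L0 : {set E}) (f : E) (vL : {set E} -> 'cV[F]_n) :
  extE A L0 f -> 'cV[F]_n :=
  fun x => match x with inl e => A e | inr L => vL (val L) end.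

Arguments Abar [F n E] A L0 f vL _.
Arguments extE [F n E] A L0 f.

Definition lemma4p1_setting (K : finFieldType) (F : fieldType) (n : nat)
  (E : finType) (A : E -> 'cV[F]_n) (L0 : {set E}) (v : 'cV[F]_n) (f : E)
  (vL : {set E} -> 'cV[F]_n) : Prop :=
  (exists phi : {rmorphism K -> F}, injective phi) /\
      isPG K A /\
      mline (mindep A) L0 /\
      (v \in colspan A L0 /\ (forall e, e \in L0 -> v \notin <[A e]>%VS)) /\
      f \notin L0 /\
      forall L, calL A L0 f L ->
        vL L != 0 /\ vL L \in (colspan A L :&: (<[v]> + <[A f]>))%VS.

From HB Require Import structures.
From mathcomp Require Import all_boot all_order all_algebra.
From mathcomp Require Import zify.
Set Implicit Arguments. Unset Strict Implicit. Unset Printing Implicit Defensive.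
Import GRing.Theory.
Local Open Scope ring_scope.

(* The rank of a set of columns of Abar is determined by N alone. All new
   vectors v_L lie in the 2-dimensional space ell = col(v | A[f]); v_L lies in col(A[S]) iff
   L is contained in cl_N(S); distinct v_L are not parallel; and
   dim(col(A[S]) :&: ell) is 2, 1 or 0 according as cl_N(L0 + f) lies in
   cl_N(S), some point f or line of calL lies in cl_N(S), or neither.  These
   facts only use that N is simple and modular, as PG(n-1,q) is.  Finally
   PG(n-1,q) is homogeneous on planes with a marked point, so any two instances
   are related by an isomorphism N1 -> N2 sending f1 to f2 and plane to plane;
   it preserves the rank formula and extends to the new elements by sending
   x_L to x_(image of L). *)

Section ColumnMatroid.
Variables (F : fieldType) (n : nat) (E : finType) (A : E -> 'cV[F]_n).
Local Notation cl := (mcl (mindep A)).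

Lemma colspanE (Y : {set E}) : colspan A Y = (\sum_(e in Y) <[A e]>)%VS.
Proof. by rewrite /colspan span_def big_map big_enum. Qed.

Lemma colspan_subvP (Y : {set E}) (U : {vspace 'cV[F]_n}) :
  reflect (forall e, e \in Y -> A e \in U) (colspan A Y <= U)%VS.
Proof.
apply: (iffP span_subvP) => [sYU e eY|sYU w /mapP[e]].
  by apply: sYU; apply/mapP; exists e; rewrite ?mem_enum.
by rewrite mem_enum => eY ->; apply: sYU.
Qed.

Lemma mem_colspan (Y : {set E}) e : e \in Y -> A e \in colspan A Y.
Proof. by move=> eY; apply: memv_span; apply/mapP; exists e; rewrite ?mem_enum. Qed.

Lemma colspanS (Y Z : {set E}) : Y \subset Z -> (colspan A Y <= colspan A Z)%VS.
Proof. by move=> /subsetP sYZ; apply/colspan_subvP => e /sYZ; apply: mem_colspan. Qed.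

Lemma colspan0 : colspan A set0 = 0%VS.
Proof. by rewrite colspanE big_set0. Qed.

Lemma colspan1 e : colspan A [set e] = <[A e]>%VS.
Proof. by rewrite colspanE big_set1. Qed.

Lemma colspanU (Y Z : {set E}) :
  colspan A (Y :|: Z) = (colspan A Y + colspan A Z)%VS.
Proof.
apply/eqP; rewrite eqEsubv subv_add !colspanS ?subsetUl ?subsetUr //= andbT.
apply/colspan_subvP => e /setUP[eY|eZ].
  by apply: (subvP (addvSl _ _)); apply: mem_colspan.
by apply: (subvP (addvSr _ _)); apply: mem_colspan.
Qed.

Lemma colspanU1 e (Y : {set E}) : colspan A (e |: Y) = (<[A e]> + colspan A Y)%VS.
Proof. by rewrite colspanU colspan1. Qed.

Lemma mindepE (Y : {set E}) : mindep A Y = (\dim (colspan A Y) == #|Y|).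
Proof. by rewrite /mindep /free size_map -cardE. Qed.

Lemma mrank_leq_dim (X : {set E}) : (mrank (mindep A) X <= \dim (colspan A X))%N.
Proof.
apply/bigmax_leqP => Y /andP[sYX]; rewrite mindepE => /eqP <-.
exact/dimvS/colspanS.
Qed.

(* A maximum-size independent subset of X spans every column of X, otherwise
   it could be enlarged. *)
Lemma mrankE (X : {set E}) : mrank (mindep A) X = \dim (colspan A X).
Proof.
have indep0 : (set0 \subset X) && mindep A set0.
  by rewrite sub0set mindepE colspan0 dimv0 cards0.
apply/eqP; rewrite eqn_leq mrank_leq_dim /= /mrank (bigmax_eq_arg set0) //.
case: arg_maxnP => // Y /andP[sYX]; rewrite mindepE => /eqP dimY maxY.
suff sXY : (colspan A X <= colspan A Y)%VS by rewrite -dimY dimvS.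
apply/colspan_subvP => e eX; apply/negPn/negP => AeY.
have eY : e \notin Y by apply: contra AeY; apply: mem_colspan.
have Ae0 : A e != 0 by apply: contra AeY => /eqP->; rewrite mem0v.
have disj : (<[A e]> :&: colspan A Y = 0)%VS.
  apply/eqP; rewrite -subv0; apply/subvP => w /memv_capP[/vlineP[k ->] wY].
  rewrite memv0 scaler_eq0; have [//|k0] := eqVneq k 0.
  by case/negP: AeY; rewrite -[A e](scalerK k0); apply: memvZ.
have : (#|e |: Y| <= #|Y|)%N.
  apply: maxY; rewrite subUset sub1set eX sYX /= mindepE colspanU1 cardsU1 eY.
  by rewrite -dimY; have := dimv_sum_cap <[A e]>%VS (colspan A Y);
     rewrite disj dimv0 dim_vline Ae0 addn0 => ->.
by rewrite cardsU1 eY ltnn.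
Qed.

Lemma mem_mcl (X : {set E}) e : (e \in cl X) = (A e \in colspan A X).
Proof.
rewrite inE !mrankE colspanU1.
have /eq_leqif := dimv_leqif_sup (addvSr <[A e]>%VS (colspan A X)).
rewrite eq_sym => ->.
by rewrite subv_add subvv andbT -memvE.
Qed.

Lemma subset_mcl (X : {set E}) : X \subset cl X.
Proof. by apply/subsetP => e eX; rewrite mem_mcl mem_colspan. Qed.

Lemma colspan_mcl (X : {set E}) : colspan A (cl X) = colspan A X.
Proof.
apply/eqP; rewrite eqEsubv (colspanS (subset_mcl X)) andbT.
by apply/colspan_subvP => e; rewrite mem_mcl.
Qed.

Lemma mclK (X : {set E}) : cl (cl X) = cl X.
Proof. by apply/setP => e; rewrite !mem_mcl colspan_mcl. Qed.

Lemma subset_mclE (X Y : {set E}) :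
  (X \subset cl Y) = (colspan A X <= colspan A Y)%VS.
Proof.
apply/idP/idP => [/colspanS|sXY]; first by rewrite colspan_mcl.
by apply/subsetP => e eX; rewrite mem_mcl (subvP sXY) ?mem_colspan.
Qed.

Lemma mcl_sub (X Y : {set E}) : X \subset cl Y -> cl X \subset cl Y.
Proof. by rewrite !subset_mclE colspan_mcl. Qed.

Lemma flat_colspan_inj (X Y : {set E}) : cl X = X -> cl Y = Y ->
  colspan A X = colspan A Y -> X = Y.
Proof. by move=> clX clY eXY; apply/setP => e; rewrite -clX -clY !mem_mcl eXY. Qed.

End ColumnMatroid.

Section MatroidIso.
Variables (E1 E2 : finType) (ind1 : {set E1} -> bool) (ind2 : {set E2} -> bool).
Variables (phi : E1 -> E2) (phi' : E2 -> E1).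
Hypotheses (phiK : cancel phi phi') (phi'K : cancel phi' phi).
Hypothesis ind_phi : forall Y, ind1 Y = ind2 (phi @: Y).

Lemma imset_phi'K (Z : {set E2}) : phi @: (phi' @: Z) = Z.
Proof. by rewrite -imset_comp (eq_imset _ phi'K) imset_id. Qed.

Lemma imset_phiK (Z : {set E1}) : phi' @: (phi @: Z) = Z.
Proof. by rewrite -imset_comp (eq_imset _ phiK) imset_id. Qed.

Lemma subset_imset_phi (X Y : {set E1}) : (phi @: X \subset phi @: Y) = (X \subset Y).
Proof. by apply/idP/idP => [/(imsetS phi')|/(imsetS phi)]; rewrite ?imset_phiK. Qed.

Lemma mem_imset_phi (X : {set E1}) x : (phi x \in phi @: X) = (x \in X).
Proof. exact: (mem_imset _ _ (can_inj phiK)). Qed.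

Lemma mrank_iso (X : {set E1}) : mrank ind2 (phi @: X) = mrank ind1 X.
Proof.
apply/eqP; rewrite eqn_leq; apply/andP; split; apply/bigmax_leqP.
  move=> Z /andP[sZ iZ].
  apply: (bigmax_sup (phi' @: Z)); last by rewrite (card_imset _ (can_inj phi'K)).
  by rewrite -subset_imset_phi imset_phi'K sZ /= ind_phi imset_phi'K.
move=> Y /andP[sY iY].
apply: (bigmax_sup (phi @: Y)); last by rewrite (card_imset _ (can_inj phiK)).
by rewrite subset_imset_phi sY /= -ind_phi.
Qed.

Lemma mcl_iso (X : {set E1}) : mcl ind2 (phi @: X) = phi @: mcl ind1 X.
Proof. by apply/setP => y; rewrite -[y]phi'K mem_imset_phi !inE -imsetU1 !mrank_iso. Qed.

Lemma mline_iso (L : {set E1}) : mline ind2 (phi @: L) = mline ind1 L.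
Proof. by rewrite /mline mcl_iso mrank_iso (inj_eq (imset_inj (can_inj phiK))). Qed.

End MatroidIso.

Section VectorLines.
Variables (F : fieldType) (vT : vectType F).
Implicit Types (u w : vT) (U : {vspace vT}).

Lemma vline_sym u w : w != 0 -> (w \in <[u]>)%VS -> (u \in <[w]>)%VS.
Proof.
move=> w0 /vlineP[k def_w]; have k0 : k != 0.
  by apply: contra w0 => /eqP k0; rewrite def_w k0 scale0r.
by rewrite -(scalerK k0 u) -def_w; apply: memvZ; apply: memv_line.
Qed.

Lemma vline_eq u w : w != 0 -> (w \in <[u]>)%VS -> <[w]>%VS = <[u]>%VS.
Proof. by move=> w0 wu; apply/eqP; rewrite eqEsubv -!memvE wu vline_sym. Qed.

Lemma dimv_vline2 u w : u \notin <[w]>%VS -> w != 0 -> \dim (<[u]> + <[w]>)%VS = 2%N.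
Proof.
move=> uw w0; have : free [:: u; w] by rewrite free_cons span_seq1 uw seq1_free.
by rewrite /free span_cons span_seq1 => /eqP.
Qed.

Lemma capv_vline0 U u : u \notin U -> (U :&: <[u]> = 0)%VS.
Proof.
move=> uU; apply/eqP; rewrite -subv0; apply/subvP => w /memv_capP[wU /vlineP[k def_w]].
rewrite memv0 def_w scaler_eq0; have [//|k0] := eqVneq k 0.
by case/negP: uU; rewrite -(scalerK k0 u) -def_w; apply: memvZ.
Qed.

Lemma dimv_add_vline U u : u != 0 -> \dim (U + <[u]>)%VS = (\dim U + (u \notin U))%N.
Proof.
move=> u0; have [uU|uU] := boolP (u \in U).
  by move: uU; rewrite memvE => /addv_idPl ->; rewrite addn0.
by have := dimv_sum_cap U <[u]>%VS; rewrite capv_vline0 // dimv0 addn0 dim_vline u0.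
Qed.

End VectorLines.

Definition col_simple (F : fieldType) (n : nat) (E : finType) (A : E -> 'cV[F]_n) :=
  forall X : {set E}, (#|X| <= 2)%N -> mindep A X.

Definition col_modular (F : fieldType) (n : nat) (E : finType) (A : E -> 'cV[F]_n) :=
  forall X Y : {set E}, mcl (mindep A) X = X -> mcl (mindep A) Y = Y ->
    (colspan A X :&: colspan A Y)%VS = colspan A (X :&: Y).

Section ColumnIso.
Variables (F1 F2 : fieldType) (n1 n2 : nat) (E1 E2 : finType).
Variables (A1 : E1 -> 'cV[F1]_n1) (A2 : E2 -> 'cV[F2]_n2).
Variables (phi : E1 -> E2) (phi' : E2 -> E1).
Hypotheses (phiK : cancel phi phi') (phi'K : cancel phi' phi).
Hypothesis mindep_phi : forall Y, mindep A1 Y = mindep A2 (phi @: Y).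

Lemma dim_colspan_iso (X : {set E1}) :
  \dim (colspan A1 X) = \dim (colspan A2 (phi @: X)).
Proof. by rewrite -!mrankE (mrank_iso phiK phi'K mindep_phi). Qed.

Lemma mem_colspan_iso (X : {set E1}) e :
  (A2 (phi e) \in colspan A2 (phi @: X)) = (e \in mcl (mindep A1) X).
Proof. by rewrite -mem_mcl (mcl_iso phiK phi'K mindep_phi) (mem_imset_phi phiK). Qed.

Lemma col_simple_iso : col_simple A2 -> col_simple A1.
Proof.
by move=> simple2 X leX2; rewrite mindep_phi simple2 // (card_imset _ (can_inj phiK)).
Qed.

Lemma col_modular_iso : col_modular A2 -> col_modular A1.
Proof.
move=> modular2 X Y clX clY; apply/eqP; rewrite eq_sym eqEdim subv_cap.
rewrite !colspanS ?subsetIl ?subsetIr //=.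
have phi_inj : {in X & Y, injective phi} by move=> a b _ _; exact: (can_inj phiK).
have dim1 := dimv_sum_cap (colspan A1 X) (colspan A1 Y).
have dim2 := dimv_sum_cap (colspan A2 (phi @: X)) (colspan A2 (phi @: Y)).
rewrite -colspanU in dim1.
rewrite -colspanU modular2 ?(mcl_iso phiK phi'K mindep_phi) ?clX ?clY //
        -imsetU -(imsetI phi_inj) -!dim_colspan_iso in dim2.
by rewrite -(leq_add2l (\dim (colspan A1 (X :|: Y)))) dim1 dim2.
Qed.

End ColumnIso.

Section ProjectiveGeometry.
Variables (K : finFieldType) (n : nat).

Definition pgv (p : PGpt K n) : 'cV[K]_n := val p.

Lemma pgv_neq0 (p : PGpt K n) : pgv p != 0.
Proof.
rewrite /pgv; case: p => w /= /existsP[i /andP[/eqP wi _]].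
by apply: contra_eq_neq wi => ->; rewrite mxE eq_sym oner_neq0.
Qed.

Lemma pgv_vline_inj (p q : PGpt K n) : (pgv p \in <[pgv q]>)%VS -> p = q.
Proof.
rewrite /pgv; case: p q => [a na] [b nb] /= /vlineP[k def_a]; apply: val_inj => /=.
case/existsP: na => i /andP[/eqP ai /forallP za].
case/existsP: nb => j /andP[/eqP bj /forallP zb].
have aE x : a x 0 = k * b x 0 by rewrite def_a mxE.
have ij : i = j.
  apply/val_inj; case: (ltngtP i j) => // [lij|lji].
    by move/implyP/(_ lij)/eqP: (zb i) ai => bi; rewrite aE bi mulr0 => /eqP; rewrite eq_sym oner_eq0.
  by move/implyP/(_ lji)/eqP: (za j); rewrite aE bj mulr1 => k0; move: ai; rewrite aE k0 mul0r => /eqP; rewrite eq_sym oner_eq0.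
subst j; have k1 : k = 1 by move: ai; rewrite aE bj mulr1.
by rewrite def_a k1 scale1r.
Qed.

(* Normalizing by the first nonzero entry. *)
Lemma pgv_exists (w : 'cV[K]_n) : w != 0 -> exists p : PGpt K n, (w \in <[pgv p]>)%VS.
Proof.
move=> w0; have [i wi] : exists i : 'I_n, w i 0 != 0.
  apply/existsP; apply: contraR w0 => /existsPn w0; apply/eqP/matrixP => x y.
  by rewrite !mxE (ord1 y); apply/eqP; move: (w0 x); rewrite negbK.
case: (@arg_minnP _ i (fun j : 'I_n => w j 0 != 0) val wi) => j wj minj.
have nu : pg_normalized ((w j 0)^-1 *: w).
  apply/existsP; exists j; rewrite mxE mulVf // eqxx /=.
  apply/forallP => k; apply/implyP => kj; rewrite mxE.
  suff /negPn/eqP -> : ~~ (w k 0 != 0) by rewrite mulr0.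
  by apply: contraTN kj => /minj; rewrite -leqNgt.
exists (exist (fun u => pg_normalized u) _ nu); apply/vlineP; exists (w j 0).
by rewrite /pgv /= scalerA divff // scale1r.
Qed.

Lemma pg_simple : col_simple pgv.
Proof.
move=> X; rewrite mindepE leq_eqVlt ltnS leq_eqVlt ltnS leqn0.
case/or3P=> [/cards2P[p [q [pq ->]]]|/cards1P[p ->]|/eqP/cards0_eq ->].
- rewrite cards2 pq colspanU1 colspan1 dimv_vline2 ?pgv_neq0 //.
  by apply: contra pq => /pgv_vline_inj ->.
- by rewrite colspan1 dim_vline pgv_neq0 cards1.
- by rewrite colspan0 dimv0 cards0.
Qed.

Lemma pg_modular : col_modular pgv.
Proof.
move=> X Y clX clY; apply/eqP.
rewrite eqEsubv subv_cap !colspanS ?subsetIl ?subsetIr // !andbT.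
apply/subvP => w /memv_capP[wX wY].
have [->|w0] := eqVneq w 0; first exact: mem0v.
have [p wp] := pgv_exists w0; have pw := vline_sym w0 wp.
have mem_flat Z : mcl (mindep pgv) Z = Z -> w \in colspan pgv Z -> p \in Z.
  by move=> clZ wZ; rewrite -clZ mem_mcl (subvP _ _ pw) // -memvE.
apply: (subvP _ _ wp); rewrite -memvE mem_colspan // inE.
by rewrite !mem_flat.
Qed.

End ProjectiveGeometry.

Arguments pgv {K n}.

Section PointedSubspaces.
Variables (F : fieldType) (vT : vectType F).

Definition basis_through (U : {vspace vT}) (p : vT) : seq vT :=
  p :: vbasis (U :\: <[p]>)%VS.

Definition full_basis_through (U : {vspace vT}) (p : vT) : seq vT :=
  basis_through U p ++ vbasis (U^C)%VS.

Lemma basis_throughP (U : {vspace vT}) (p : vT) :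
  p \in U -> p != 0 -> basis_of U (basis_through U p).
Proof.
move=> pU p0; have defU : (<[p]> + (U :\: <[p]>))%VS = U.
  rewrite addvC -{2}(addv_diff_cap U <[p]>%VS); congr (_ + _)%VS.
  by apply/esym/capv_idPr; rewrite -memvE.
rewrite -{1}defU; apply: (cat_basis _ (seq1_basis p0) (vbasisP _)).
by apply/directv_addP; rewrite capvC capv_diff.
Qed.

Lemma full_basis_throughP (U : {vspace vT}) (p : vT) :
  p \in U -> p != 0 -> basis_of fullv (full_basis_through U p).
Proof.
move=> pU p0; rewrite -(addv_complf U).
apply: (cat_basis _ (basis_throughP pU p0) (vbasisP _)).
by apply/directv_addP; rewrite capv_compl.
Qed.

Lemma size_basis_of (U : {vspace vT}) X : basis_of U X -> size X = \dim U.
Proof. by case/andP => /eqP <- /eqP. Qed.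

(* Send the basis through p1 of U1, completed to a basis of the space, onto
   the corresponding basis through p2 of U2. *)
Lemma exists_lfun_pointed_subspace (U1 U2 : {vspace vT}) (p1 p2 : vT) :
  \dim U1 = \dim U2 -> p1 \in U1 -> p2 \in U2 -> p1 != 0 -> p2 != 0 ->
  exists h : 'End(vT), [/\ lker h == 0%VS, h p1 = p2 & (h @: U1)%VS = U2].
Proof.
move=> dimU pU1 pU2 p1_0 p2_0.
have B1 := full_basis_throughP pU1 p1_0; have B2 := full_basis_throughP pU2 p2_0.
have [g gP] := linear_of_free (full_basis_through U1 p1) (full_basis_through U2 p2).
have := gP (basis_free B1) (etrans (size_basis_of B2) (esym (size_basis_of B1))).
pose h : 'End(vT) := linfun g.
have -> : map g (full_basis_through U1 p1) = map h (full_basis_through U1 p1).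
  by apply: eq_map => x; rewrite lfunE.
rewrite /full_basis_through map_cat => /eqP; rewrite eqseq_cat; last first.
  by rewrite size_map !(size_basis_of (basis_throughP _ _)).
case/andP => /eqP h_through /eqP h_compl.
have h_onto : (h @: fullv)%VS = fullv.
  rewrite -{1}(span_basis B1) limg_span /full_basis_through map_cat h_through h_compl.
  exact: span_basis B2.
have h_ker0 : lker h == 0%VS.
  have := limg_ker_dim h fullv; rewrite h_onto capfv => /eqP.
  by rewrite -{2}[\dim fullv]add0n eqn_add2r dimv_eq0.
exists h; split => //; first by case: h_through.
rewrite -(span_basis (basis_throughP pU1 p1_0)) limg_span h_through.
exact: span_basis (basis_throughP pU2 p2_0).
Qed.

End PointedSubspaces.

Lemma pg_pointed_subspace_iso (K : finFieldType) (n : nat)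
    (U1 U2 : {vspace 'cV[K]_n}) (p1 p2 : PGpt K n) :
  \dim U1 = \dim U2 -> pgv p1 \in U1 -> pgv p2 \in U2 ->
  exists sigma : PGpt K n -> PGpt K n, exists sigma' : PGpt K n -> PGpt K n,
   [/\ cancel sigma sigma', cancel sigma' sigma,
       (forall Y, mindep pgv Y = mindep pgv (sigma @: Y)), sigma p1 = p2 &
       forall p, (pgv (sigma p) \in U2) = (pgv p \in U1)].
Proof.
move=> dimU pU1 pU2.
have [h [h_ker0 hp hU]] := exists_lfun_pointed_subspace dimU pU1 pU2 (pgv_neq0 p1) (pgv_neq0 p2).
have h_inj : injective h by apply/lker0P.
have h_neq0 p : h (pgv p) != 0 by rewrite -(linear0 h) (inj_eq h_inj) pgv_neq0.
pose sigma p := odflt p [pick q | h (pgv p) \in <[pgv q]>%VS].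
have sigma_line p : <[pgv (sigma p)]>%VS = <[h (pgv p)]>%VS.
  apply/esym/vline_eq; rewrite ?h_neq0 // /sigma; case: pickP => [q //|none].
  by have [q hq] := pgv_exists (h_neq0 p); move: (none q); rewrite hq.
have mem_vline_h p q : (pgv p \in <[pgv q]>)%VS = (h (pgv p) \in <[h (pgv q)]>)%VS.
  by rewrite !memvE -!limg_line limg_ker0.
have sigma_inj : injective sigma.
  move=> a b eab; apply: pgv_vline_inj.
  by rewrite mem_vline_h -sigma_line -eab sigma_line memv_line.
have [sigma' sigmaK sigma'K] := injF_bij sigma_inj.
exists sigma, sigma'; split => //.
- move=> Y; rewrite !mindepE card_imset // !colspanE big_imset /=; last first.
    by move=> a b _ _; apply: sigma_inj.
  rewrite [in RHS](eq_bigr (fun p => h @: <[pgv p]>)%VS); last first.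
    by move=> p _; rewrite sigma_line limg_line.
  by rewrite -limg_sum limg_dim_eq // (eqP h_ker0) capv0.
- by apply/esym/pgv_vline_inj; rewrite sigma_line hp memv_line.
- by move=> p; rewrite -hU !memvE sigma_line -limg_line limg_ker0.
Qed.

Section SimpleModular.
Variables (F : fieldType) (n : nat) (E : finType) (A : E -> 'cV[F]_n).
Hypotheses (A_simple : col_simple A) (A_modular : col_modular A).
Local Notation cl := (mcl (mindep A)).

Lemma col_neq0 e : A e != 0.
Proof.
have := @A_simple [set e]; rewrite mindepE colspan1 dim_vline cards1.
by case: (A e != 0) => //; apply.
Qed.

Lemma dim_colspan_pair g h : g != h -> \dim (colspan A [set g; h]) = 2%N.
Proof. by move=> gh; have := @A_simple [set g; h]; rewrite mindepE cards2 gh => /(_ isT)/eqP. Qed.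

Lemma colspan_pair_eq (Z : {set E}) g h : (\dim (colspan A Z) <= 2)%N ->
  g \in Z -> h \in Z -> g != h -> colspan A Z = colspan A [set g; h].
Proof.
move=> dimZ gZ hZ gh; apply/eqP; rewrite eq_sym eqEdim dim_colspan_pair // dimZ andbT.
by apply: colspanS; rewrite subUset !sub1set gZ hZ.
Qed.

Lemma card_gt1_nonparallel (Z : {set E}) (w : 'cV[F]_n) : w != 0 ->
  w \in colspan A Z -> (forall g, g \in Z -> w \notin <[A g]>%VS) -> (1 < #|Z|)%N.
Proof.
move=> w0 wZ w_nonpar; rewrite ltnNge leq_eqVlt ltnS leqn0.
apply/negP => /orP[/cards1P[g defZ]|/eqP/cards0_eq defZ].
  by move: wZ (w_nonpar g); rewrite defZ colspan1 inE eqxx => -> /(_ isT).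
by move: wZ; rewrite defZ colspan0 memv0 (negbTE w0).
Qed.

Lemma mline_flat L : mline (mindep A) L -> cl L = L.
Proof. by case/andP => /eqP. Qed.

Lemma mline_dim L : mline (mindep A) L -> \dim (colspan A L) = 2%N.
Proof. by case/andP => _ /eqP; rewrite mrankE. Qed.

Lemma dim_colspan_plane L e : mline (mindep A) L -> e \notin L ->
  \dim (colspan A (cl (e |: L))) = 3%N.
Proof.
move=> lineL eL; rewrite colspan_mcl colspanU1 addvC dimv_add_vline ?col_neq0 //.
by rewrite mline_dim // -mem_mcl mline_flat // eL.
Qed.

(* Modularity puts w in the span of Z :&: L, which then contains two points of
   the line L, hence spans it. *)
Lemma mline_sub_flat (Z L : {set E}) (w : 'cV[F]_n) :
  cl Z = Z -> mline (mindep A) L -> w != 0 -> w \in colspan A Z ->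
  w \in colspan A L -> (forall g, g \in L -> w \notin <[A g]>%VS) -> L \subset Z.
Proof.
move=> clZ lineL w0 wZ wL w_nonpar.
have wZL : w \in colspan A (Z :&: L).
  by rewrite -(A_modular clZ (mline_flat lineL)) memv_cap wZ.
have /card_gt1P[g [h [/setIP[gZ gL] /setIP[hZ hL] gh]]] : (1 < #|Z :&: L|)%N.
  by apply: (card_gt1_nonparallel w0 wZL) => g /setIP[_ /w_nonpar].
rewrite -clZ subset_mclE (colspan_pair_eq _ gL hL gh) ?mline_dim //.
by apply: colspanS; rewrite subUset !sub1set gZ hZ.
Qed.

Variables (L0 : {set E}) (v : 'cV[F]_n) (f : E) (vL : {set E} -> 'cV[F]_n).
Hypotheses (L0_line : mline (mindep A) L0) (v_colspan : v \in colspan A L0)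
  (v_nonparallel : forall e, e \in L0 -> v \notin <[A e]>%VS) (f_notin : f \notin L0)
  (vL_spec : forall L, calL A L0 f L ->
        vL L != 0 /\ vL L \in (colspan A L :&: (<[v]> + <[A f]>))%VS).

Local Notation ell := (<[v]> + <[A f]>)%VS.
Local Notation plane := (cl (f |: L0)).

Lemma v_neq0 : v != 0.
Proof.
have /set0Pn[e eL0] : L0 != set0.
  by apply: contra_eq_neq (mline_dim L0_line) => ->; rewrite colspan0 dimv0.
by apply: contra (v_nonparallel eL0) => /eqP ->; apply: mem0v.
Qed.

Lemma dim_ell_leq2 : (\dim ell <= 2)%N.
Proof. by rewrite -(span_seq1 (A f)) -span_cons; apply: dim_span. Qed.

Lemma ell_sub_plane : (ell <= colspan A plane)%VS.
Proof. by rewrite colspan_mcl colspanU1 addvC addvS // -memvE. Qed.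

Lemma col_mem_ell e : A e \in ell -> e = f.
Proof.
move=> Ae_ell; apply/eqP; apply: contraT => ef.
have ell_pair : colspan A [set e; f] = ell.
  apply/eqP; rewrite eqEdim dim_colspan_pair // dim_ell_leq2 andbT.
  by rewrite colspanU1 colspan1 subv_add -!memvE Ae_ell memvE addvSr.
have L0_sub : L0 \subset cl [set e; f].
  apply: (mline_sub_flat (mclK _ _) L0_line v_neq0 _ v_colspan v_nonparallel).
  by rewrite colspan_mcl ell_pair memvE addvSl.
have /eqP L0_ell : colspan A L0 == ell.
  rewrite eqEdim -ell_pair -(colspan_mcl A [set e; f]) colspanS //=.
  by rewrite colspan_mcl ell_pair mline_dim ?dim_ell_leq2.
by case/negP: f_notin; rewrite -(mline_flat L0_line) mem_mcl L0_ell memvE addvSr.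
Qed.

Lemma vline_col_mem_ell (w : 'cV[F]_n) g :
  w != 0 -> w \in ell -> (w \in <[A g]>)%VS -> g = f.
Proof.
move=> w0 w_ell /(vline_sym w0); rewrite memvE => /subv_trans Ag_ell.
by apply: col_mem_ell; rewrite memvE Ag_ell // -memvE.
Qed.

Lemma vL_neq0 L : calL A L0 f L -> vL L != 0.
Proof. by case/vL_spec. Qed.

Lemma vL_mem_ell L : calL A L0 f L -> vL L \in ell.
Proof. by case/vL_spec => _ /memv_capP[]. Qed.

Lemma vL_mem_colspan L : calL A L0 f L -> vL L \in colspan A L.
Proof. by case/vL_spec => _ /memv_capP[]. Qed.

Lemma calL_mline L : calL A L0 f L -> mline (mindep A) L.
Proof. by case/and3P. Qed.

Lemma calL_notin L : calL A L0 f L -> f \notin L.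
Proof. by case/and3P. Qed.

Lemma mem_colspan_vL (S : {set E}) L : calL A L0 f L ->
  (vL L \in colspan A S) = (L \subset cl S).
Proof.
move=> LcalL; apply/idP/idP => [vLS|]; last first.
  by rewrite subset_mclE => /subvP; apply; apply: vL_mem_colspan.
apply: (mline_sub_flat (mclK _ _) (calL_mline LcalL) (vL_neq0 LcalL)).
- by rewrite colspan_mcl.
- exact: vL_mem_colspan.
move=> g gL; apply: contra (calL_notin LcalL) => vLg.
by rewrite -(vline_col_mem_ell (vL_neq0 LcalL) (vL_mem_ell LcalL) vLg).
Qed.

Lemma vL_nonparallel L L' : calL A L0 f L -> calL A L0 f L' -> L != L' ->
  vL L \notin <[vL L']>%VS.
Proof.
move=> LcalL L'calL; apply: contra => vL_par; apply/eqP.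
have L_sub : L \subset L'.
  rewrite -(mline_flat (calL_mline L'calL)) -mem_colspan_vL //.
  by move: vL_par; rewrite memvE => /subv_trans; apply; rewrite -memvE vL_mem_colspan.
apply: (flat_colspan_inj (mline_flat (calL_mline _)) (mline_flat (calL_mline _))) => //.
by apply/eqP; rewrite eqEdim colspanS //= !mline_dim ?calL_mline.
Qed.

Lemma ell_sub_colspanE (S : {set E}) : (ell <= colspan A S)%VS = (plane \subset cl S).
Proof.
apply/idP/idP => [ell_S|]; last first.
  by rewrite subset_mclE colspan_mcl; apply: subv_trans; rewrite -colspan_mcl ell_sub_plane.
have [vS fS] : v \in colspan A S /\ A f \in colspan A S.
  by split; apply: (subvP ell_S); rewrite memvE ?addvSl ?addvSr.
apply: mcl_sub; rewrite subUset sub1set mem_mcl fS /=.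
apply: (mline_sub_flat (mclK _ _) L0_line v_neq0 _ v_colspan v_nonparallel).
by rewrite colspan_mcl.
Qed.

Definition lines_calL := {L : {set E} | calL A L0 f L}.

Lemma ell_meet_colspanE (S : {set E}) : ((ell :&: colspan A S)%VS != 0%VS) =
  (f \in cl S) || [exists L : lines_calL, val L \subset cl S].
Proof.
apply/idP/idP => [meet_neq0|]; last first.
  apply: contraL => /eqP meet0; rewrite negb_or; apply/andP; split.
    rewrite mem_mcl; apply: contra (col_neq0 f) => fS.
    by rewrite -memv0 -meet0 memv_cap fS memvE addvSr.
  apply/existsPn => -[L LcalL] /=; rewrite -mem_colspan_vL //.
  by apply: contra (vL_neq0 LcalL) => vLS; rewrite -memv0 -meet0 memv_cap vLS vL_mem_ell.
have [//|fS] := boolP (f \in cl S).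
set w := vpick (ell :&: colspan A S)%VS.
have w0 : w != 0 by rewrite vpick0.
have /memv_capP[w_ell wS] := memv_pick (ell :&: colspan A S)%VS.
have w_meet : w \in colspan A (plane :&: cl S).
  by rewrite -A_modular ?mclK // memv_cap (subvP ell_sub_plane) // colspan_mcl.
have /card_gt1P[g [h [gPS hPS gh]]] : (1 < #|plane :&: cl S|)%N.
  apply: (card_gt1_nonparallel w0 w_meet) => g /setIP[_ gS]; apply/negP => wg.
  by move: fS; rewrite -(vline_col_mem_ell w0 w_ell wg) gS.
have gh_sub : [set g; h] \subset plane :&: cl S by rewrite subUset !sub1set gPS hPS.
have [gh_plane gh_S] : [set g; h] \subset plane /\ [set g; h] \subset cl S.
  by split; apply: (subset_trans gh_sub); rewrite ?subsetIl ?subsetIr.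
have LcalL : calL A L0 f (cl [set g; h]).
  apply/and3P; split; first by rewrite /mline mclK eqxx mrankE colspan_mcl dim_colspan_pair.
    exact: mcl_sub.
  by apply: contra fS; apply/subsetP; apply: mcl_sub.
by apply/existsP; exists (exist _ (cl [set g; h]) LcalL); apply: mcl_sub.
Qed.

(* The dimension of colspan A S :&: ell, read off from the matroid N. *)
Definition meet_rank (S : {set E}) : nat :=
  (if plane \subset cl S then 2 else
   if (f \in cl S) || [exists L : lines_calL, val L \subset cl S] then 1 else 0)%N.

Definition added_rank (S : {set E}) (T : {set lines_calL}) : nat :=
  (if #|T| == 0 then 0 else if #|T| == 1 then
    (if [forall L in T, val L \subset cl S] then 0 else 1) else 2 - meet_rank S)%N.

Definition old_cols (Y : {set extE A L0 f}) : {set E} := [set e | inl e \in Y].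
Definition new_cols (Y : {set extE A L0 f}) : {set lines_calL} := [set L | inr L \in Y].

Lemma colspan_Abar (Y : {set extE A L0 f}) : colspan (Abar A L0 f vL) Y =
  (colspan A (old_cols Y) + \sum_(L in new_cols Y) <[vL (val L)]>)%VS.
Proof.
apply/eqP; rewrite eqEsubv subv_add; apply/and3P; split.
- apply/colspan_subvP => -[e|L] eY /=.
    by apply: (subvP (addvSl _ _)); apply: mem_colspan; rewrite inE.
  apply: (subvP (addvSr _ _)); apply: (subvP (sumv_sup L _ (subvv _))).
    by rewrite inE.
  exact: memv_line.
- apply/colspan_subvP => e; rewrite inE => eY.
  exact: (mem_colspan (Abar A L0 f vL) eY).
- apply/subv_sumP => L; rewrite inE -memvE => LY.
  exact: (mem_colspan (Abar A L0 f vL) LY).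
Qed.

Lemma dim_meet_ell (S : {set E}) : \dim ell = 2%N ->
  \dim (colspan A S :&: ell)%VS = meet_rank S.
Proof.
move=> dim_ell; rewrite /meet_rank -ell_sub_colspanE -ell_meet_colspanE capvC.
have [/capv_idPl -> //|ell_S] := boolP (ell <= colspan A S)%VS.
have : (\dim (ell :&: colspan A S) < 2)%N.
  have [le_dim eq_dim] := dimv_leqif_eq (capvSl ell (colspan A S)).
  rewrite -dim_ell ltn_neqAle le_dim eq_dim andbT.
  by apply: contra ell_S => /eqP <-; apply: capvSr.
by rewrite -dimv_eq0; case: (\dim _) => [|[|]].
Qed.

Lemma dim_colspan_Abar (Y : {set extE A L0 f}) :
  \dim (colspan (Abar A L0 f vL) Y) =
  (\dim (colspan A (old_cols Y)) + added_rank (old_cols Y) (new_cols Y))%N.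
Proof.
rewrite colspan_Abar /added_rank; set S := old_cols Y; set T := new_cols Y.
have [/cards0_eq ->|T0] := eqVneq #|T| 0%N; first by rewrite big_set0 addv0 addn0.
have [/eqP/cards1P[L ->]|T1] := eqVneq #|T| 1%N.
  rewrite big_set1.
  have -> : [forall L' in [set L], val L' \subset cl S] = (val L \subset cl S).
    by apply/forall_inP/idP => [|LS L']; [apply; rewrite inE | rewrite inE => /eqP ->].
  by rewrite -mem_colspan_vL ?(valP L) // dimv_add_vline ?vL_neq0 ?(valP L) //; case: (_ \in _).
have /card_gt1P[L1 [L2 [L1T L2T L12]]] : (1 < #|T|)%N by case: #|T| T0 T1 => [|[|]].
have [L1calL L2calL] := (valP L1, valP L2).
have dim12 : \dim (<[vL (val L1)]> + <[vL (val L2)]>)%VS = 2%N.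
  by rewrite dimv_vline2 ?vL_neq0 ?vL_nonparallel // (inj_eq val_inj).
set XT := (\sum_(L in T) <[vL (val L)]>)%VS.
have sub12 : (<[vL (val L1)]> + <[vL (val L2)]> <= XT)%VS.
  by rewrite subv_add !(sumv_sup _ _ (subvv _)).
have XT_ell : (XT <= ell)%VS by apply/subv_sumP => L _; rewrite -memvE vL_mem_ell ?(valP L).
have dim_ell : \dim ell = 2%N.
  apply/eqP; rewrite eqn_leq dim_ell_leq2 -{1}dim12 dimvS //; exact: subv_trans XT_ell.
have -> : XT = ell by apply/eqP; rewrite eqEdim XT_ell dim_ell -dim12 dimvS.
have := dimv_sum_cap (colspan A S) ell; rewrite dim_meet_ell // dim_ell.
have : (meet_rank S <= 2)%N by rewrite /meet_rank; case: ifP => //; case: ifP.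
lia.
Qed.

End SimpleModular.

Section ExtensionIso.
Variables (n : nat) (F1 F2 : fieldType) (E1 E2 : finType).
Variables (A1 : E1 -> 'cV[F1]_n) (A2 : E2 -> 'cV[F2]_n).
Variables (L01 : {set E1}) (L02 : {set E2}) (f1 : E1) (f2 : E2).
Variables (phi : E1 -> E2) (phi' : E2 -> E1).
Hypotheses (phiK : cancel phi phi') (phi'K : cancel phi' phi).
Hypothesis mindep_phi : forall Y, mindep A1 Y = mindep A2 (phi @: Y).
Hypotheses (phi_f : phi f1 = f2)
  (phi_plane : phi @: mcl (mindep A1) (f1 |: L01) = mcl (mindep A2) (f2 |: L02)).

Lemma calL_iso L : calL A1 L01 f1 L = calL A2 L02 f2 (phi @: L).
Proof.
rewrite /calL (mline_iso phiK phi'K mindep_phi) -phi_plane.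
by rewrite (subset_imset_phi phiK) -phi_f (mem_imset_phi phiK).
Qed.

Definition lines_iso (L : lines_calL A1 L01 f1) : lines_calL A2 L02 f2 :=
  exist _ (phi @: val L) (etrans (esym (calL_iso (val L))) (valP L)).

Definition lines_iso' (L : lines_calL A2 L02 f2) : lines_calL A1 L01 f1 :=
  exist _ (phi' @: val L)
    (etrans (calL_iso (phi' @: val L)) (etrans (congr1 _ (imset_phi'K phi'K _)) (valP L))).

Lemma lines_isoK : cancel lines_iso lines_iso'.
Proof. by move=> L; apply: val_inj; rewrite /= (imset_phiK phiK). Qed.

Lemma lines_iso'K : cancel lines_iso' lines_iso.
Proof. by move=> L; apply: val_inj; rewrite /= (imset_phi'K phi'K). Qed.

Lemma subset_mcl_lines_iso (L : lines_calL A1 L01 f1) (S : {set E1}) :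
  (val (lines_iso L) \subset mcl (mindep A2) (phi @: S)) =
  (val L \subset mcl (mindep A1) S).
Proof. by rewrite /= (mcl_iso phiK phi'K mindep_phi) (subset_imset_phi phiK). Qed.

Lemma meet_rank_iso (S : {set E1}) : meet_rank A2 L02 f2 (phi @: S) = meet_rank A1 L01 f1 S.
Proof.
rewrite /meet_rank (mcl_iso phiK phi'K mindep_phi) -phi_plane (subset_imset_phi phiK).
have -> : (f2 \in phi @: mcl (mindep A1) S) = (f1 \in mcl (mindep A1) S).
  by rewrite -phi_f (mem_imset_phi phiK).
suff -> : [exists L : lines_calL A2 L02 f2, val L \subset phi @: mcl (mindep A1) S] =
          [exists L : lines_calL A1 L01 f1, val L \subset mcl (mindep A1) S] by [].
apply/existsP/existsP => -[L LS].
  by exists (lines_iso' L); rewrite -(subset_imset_phi phiK) /= (imset_phi'K phi'K).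
by exists (lines_iso L); rewrite /= (subset_imset_phi phiK).
Qed.

Definition ext_iso (x : extE A1 L01 f1) : extE A2 L02 f2 :=
  match x with inl e => inl (phi e) | inr L => inr (lines_iso L) end.

Definition ext_iso' (x : extE A2 L02 f2) : extE A1 L01 f1 :=
  match x with inl e => inl (phi' e) | inr L => inr (lines_iso' L) end.

Lemma ext_isoK : cancel ext_iso ext_iso'.
Proof. by case=> [e|L] /=; rewrite ?phiK ?lines_isoK. Qed.

Lemma ext_iso'K : cancel ext_iso' ext_iso.
Proof. by case=> [e|L] /=; rewrite ?phi'K ?lines_iso'K. Qed.

Lemma old_cols_iso (Y : {set extE A1 L01 f1}) : old_cols (ext_iso @: Y) = phi @: old_cols Y.
Proof.
apply/setP => e; rewrite -[e]phi'K (mem_imset_phi phiK) !inE.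
by rewrite -[inl _]/(ext_iso (inl _)) (mem_imset _ _ (can_inj ext_isoK)).
Qed.

Lemma new_cols_iso (Y : {set extE A1 L01 f1}) :
  new_cols (ext_iso @: Y) = lines_iso @: new_cols Y.
Proof.
apply/setP => L; rewrite -[L]lines_iso'K (mem_imset _ _ (can_inj lines_isoK)) !inE.
by rewrite -[inr _]/(ext_iso (inr _)) (mem_imset _ _ (can_inj ext_isoK)).
Qed.

Lemma added_rank_iso (S : {set E1}) (T : {set lines_calL A1 L01 f1}) :
  added_rank (phi @: S) (lines_iso @: T) = added_rank S T.
Proof.
rewrite /added_rank (card_imset _ (can_inj lines_isoK)) meet_rank_iso.
suff -> : [forall L in lines_iso @: T, val L \subset mcl (mindep A2) (phi @: S)] =
          [forall L in T, val L \subset mcl (mindep A1) S] by [].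
apply/forall_inP/forall_inP => [LS L LT|LS _ /imsetP[L LT ->]].
  by rewrite -subset_mcl_lines_iso LS ?imset_f.
by rewrite subset_mcl_lines_iso LS.
Qed.

(* Both extensions obey the rank formula of dim_colspan_Abar, whose
   ingredients are invariant under phi. *)
Variables (vL1 : {set E1} -> 'cV[F1]_n) (vL2 : {set E2} -> 'cV[F2]_n).
Hypothesis rank_formula1 : forall Y, \dim (colspan (Abar A1 L01 f1 vL1) Y) =
  (\dim (colspan A1 (old_cols Y)) + added_rank (old_cols Y) (new_cols Y))%N.
Hypothesis rank_formula2 : forall Y, \dim (colspan (Abar A2 L02 f2 vL2) Y) =
  (\dim (colspan A2 (old_cols Y)) + added_rank (old_cols Y) (new_cols Y))%N.

Lemma miso_Abar : miso (mindep (Abar A1 L01 f1 vL1)) (mindep (Abar A2 L02 f2 vL2)).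
Proof.
exists ext_iso; split; first by exists ext_iso'; [apply: ext_isoK | apply: ext_iso'K].
move=> Y; rewrite !mindepE (card_imset _ (can_inj ext_isoK)) rank_formula1 rank_formula2.
by rewrite old_cols_iso new_cols_iso added_rank_iso -(dim_colspan_iso phiK phi'K mindep_phi).
Qed.

End ExtensionIso.

Section PointedFlatIso.
Variables (K : finFieldType) (n : nat) (F1 F2 : fieldType) (E1 E2 : finType).
Variables (A1 : E1 -> 'cV[F1]_n) (A2 : E2 -> 'cV[F2]_n).
Variables (psi1 : E1 -> PGpt K n) (psi1' : PGpt K n -> E1).
Variables (psi2 : E2 -> PGpt K n) (psi2' : PGpt K n -> E2).
Hypotheses (psi1K : cancel psi1 psi1') (psi1'K : cancel psi1' psi1).
Hypotheses (psi2K : cancel psi2 psi2') (psi2'K : cancel psi2' psi2).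
Hypothesis mindep_psi1 : forall Y, mindep A1 Y = mindep pgv (psi1 @: Y).
Hypothesis mindep_psi2 : forall Y, mindep A2 Y = mindep pgv (psi2 @: Y).

(* PG(n-1,q) is homogeneous on pointed flats of equal rank: conjugate the
   collineation of pg_pointed_subspace_iso by psi1 and psi2. *)
Lemma exists_pointed_flat_iso (X1 : {set E1}) (X2 : {set E2}) f1 f2 :
  mcl (mindep A1) X1 = X1 -> mcl (mindep A2) X2 = X2 ->
  \dim (colspan A1 X1) = \dim (colspan A2 X2) -> f1 \in X1 -> f2 \in X2 ->
  exists phi : E1 -> E2, exists phi' : E2 -> E1,
    [/\ cancel phi phi', cancel phi' phi,
        forall Y, mindep A1 Y = mindep A2 (phi @: Y), phi f1 = f2 & phi @: X1 = X2].
Proof.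
move=> clX1 clX2 dimX fX1 fX2.
have mem1 e : (pgv (psi1 e) \in colspan pgv (psi1 @: X1)) = (e \in X1).
  by rewrite (mem_colspan_iso psi1K psi1'K mindep_psi1) clX1.
have mem2 e : (pgv (psi2 e) \in colspan pgv (psi2 @: X2)) = (e \in X2).
  by rewrite (mem_colspan_iso psi2K psi2'K mindep_psi2) clX2.
have [|||sigma [sigma' [sigmaK sigma'K mindep_sigma sigma_f sigma_X]]] :=
  @pg_pointed_subspace_iso K n (colspan pgv (psi1 @: X1)) (colspan pgv (psi2 @: X2))
    (psi1 f1) (psi2 f2).
- by rewrite -(dim_colspan_iso psi1K psi1'K mindep_psi1)
             -(dim_colspan_iso psi2K psi2'K mindep_psi2).
- by rewrite mem1.
- by rewrite mem2.
pose phi := psi2' \o sigma \o psi1; pose phi' := psi1' \o sigma' \o psi2.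
have phiK : cancel phi phi' by move=> e; rewrite /phi /phi' /= psi2'K sigmaK psi1K.
have phi'K : cancel phi' phi by move=> e; rewrite /phi /phi' /= psi1'K sigma'K psi2K.
exists phi, phi'; split => //.
- move=> Y; rewrite mindep_psi1 mindep_sigma mindep_psi2 -!imset_comp.
  by congr (mindep _ _); apply: eq_imset => e /=; rewrite psi2'K.
- by rewrite /phi /= sigma_f psi2K.
apply/setP => e; rewrite -[e]phi'K (mem_imset_phi phiK) -mem2 -mem1.
by rewrite /phi /= psi2'K sigma_X.
Qed.

End PointedFlatIso.

Theorem lemma4p1 (K : finFieldType) (q n : nat) :
  #|K| = q -> (3 <= n)%N ->
  forall (F1 : fieldType) (E1 : finType) (A1 : E1 -> 'cV[F1]_n)
         (L01 : {set E1}) (v1 : 'cV[F1]_n) (f1 : E1) (vL1 : {set E1} -> 'cV[F1]_n)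
         (F2 : fieldType) (E2 : finType) (A2 : E2 -> 'cV[F2]_n)
         (L02 : {set E2}) (v2 : 'cV[F2]_n) (f2 : E2) (vL2 : {set E2} -> 'cV[F2]_n),
  lemma4p1_setting K A1 L01 v1 f1 vL1 ->
  lemma4p1_setting K A2 L02 v2 f2 vL2 ->
  miso (mindep (Abar A1 L01 f1 vL1)) (mindep (Abar A2 L02 f2 vL2)).
Proof.
move=> _ _ F1 E1 A1 L01 v1 f1 vL1 F2 E2 A2 L02 v2 f2 vL2.
case=> _ [[psi1 [[psi1' psi1K psi1'K] PG1]] [L01_line [[v1L0 v1_nonpar] [f1L0 vL1_spec]]]].
case=> _ [[psi2 [[psi2' psi2K psi2'K] PG2]] [L02_line [[v2L0 v2_nonpar] [f2L0 vL2_spec]]]].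
have mindep_psi1 Y : mindep A1 Y = mindep pgv (psi1 @: Y) := PG1 Y.
have mindep_psi2 Y : mindep A2 Y = mindep pgv (psi2 @: Y) := PG2 Y.
have simple1 := col_simple_iso psi1K mindep_psi1 (@pg_simple K n).
have simple2 := col_simple_iso psi2K mindep_psi2 (@pg_simple K n).
have modular1 := col_modular_iso psi1K psi1'K mindep_psi1 (@pg_modular K n).
have modular2 := col_modular_iso psi2K psi2'K mindep_psi2 (@pg_modular K n).
have [phi [phi' [phiK phi'K mindep_phi phi_f phi_plane]]] :=
  exists_pointed_flat_iso psi1K psi1'K psi2K psi2'K mindep_psi1 mindep_psi2
    (mclK _ _) (mclK _ _)
    (etrans (dim_colspan_plane simple1 L01_line f1L0)
            (esym (dim_colspan_plane simple2 L02_line f2L0)))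
    (subsetP (subset_mcl _ _) _ (setU11 _ _)) (subsetP (subset_mcl _ _) _ (setU11 _ _)).
apply: (miso_Abar phiK phi'K mindep_phi phi_f phi_plane).
  exact: (dim_colspan_Abar simple1 modular1 L01_line v1L0 v1_nonpar f1L0 vL1_spec).
exact: (dim_colspan_Abar simple2 modular2 L02_line v2L0 v2_nonpar f2L0 vL2_spec).
Qed.
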